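(* Let $J\ge2$, $\iota_1,\dots,\iota_J\in\{\pm1\}$ and distinct $z_1^*,\dots,z_J^*\in\mathbb{R}^N$. If $\#\{i:\iota_i=+1\}\le1$ or $\#\{i:\iota_i=-1\}\le1$, then the configuration $\{(\iota_1,z_1^* ),\dots,(\iota_J,z_J^* )\}$ is totally non-degenerate. In particular, any degenerate configuration has at least two positive signs and two negative signs, so $J\ge4$.
   Context: $N\ge7$. $A^*_{ij}=\mathbf 1_{i\ne j}\kappa_0\kappa_\infty\frac{\iota_i\iota_j}{|z_i^*-z_j^*|^{N-2}}$ with fixed positive constants $\kappa_0,\kappa_\infty$. A configuration (of size $\ge2$) is non-degenerate if $A^*$ has no nonzero kernel element in $[0,\infty)^J$, degenerate otherwise; it is totally non-degenerate if every sub-configuration $\{(\iota_i,z_i^* ):i\in\mathcal I\}$ with $|\mathcal I|\ge2$ is non-degenerate (with the corresponding submatrix of $A^*$). *)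

From HB Require Import structures.
From mathcomp Require Import all_boot all_order all_algebra.
From mathcomp Require Import reals.
Set Implicit Arguments. Unset Strict Implicit. Unset Printing Implicit Defensive.
Import Order.TTheory GRing.Theory Num.Theory.
Local Open Scope ring_scope.

Definition edist (R : realType) (N : nat) (u v : 'rV[R]_N) : R :=
  Num.sqrt (\sum_(k < N) (u 0 k - v 0 k) ^+ 2).

Definition Amat (R : realType) (N J : nat) (k0 kinf : R)
    (iota : 'I_J -> R) (z : 'I_J -> 'rV[R]_N) : 'M[R]_J :=
  \matrix_(i, j) (if i != j then
      k0 * kinf * iota i * iota j / (edist (z i) (z j)) ^+ (N - 2)
    else 0).

Definition conf_nondegenerate (R : realType) (N J : nat) (k0 kinf : R)
    (iota : 'I_J -> R) (z : 'I_J -> 'rV[R]_N) : Prop :=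
  ~ (exists x : 'cV[R]_J,
       [/\ x != 0, (forall i, 0 <= x i 0) & Amat k0 kinf iota z *m x = 0]).

Definition subconf_iota (R : realType) (J : nat) (I : {set 'I_J})
    (iota : 'I_J -> R) : 'I_#|I| -> R := fun a => iota (enum_val a).
Definition subconf_z (R : realType) (N J : nat) (I : {set 'I_J})
    (z : 'I_J -> 'rV[R]_N) : 'I_#|I| -> 'rV[R]_N := fun a => z (enum_val a).

Definition conf_totally_nondegenerate (R : realType) (N J : nat) (k0 kinf : R)
    (iota : 'I_J -> R) (z : 'I_J -> 'rV[R]_N) : Prop :=
  forall I : {set 'I_J}, (2 <= #|I|)%N ->
    conf_nondegenerate k0 kinf (@subconf_iota R J I iota) (@subconf_z R N J I z).

Definition npos (R : realType) (J : nat) (iota : 'I_J -> R) : nat :=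
  #|[set i | iota i == 1]|.
Definition nneg (R : realType) (J : nat) (iota : 'I_J -> R) : nat :=
  #|[set i | iota i == -1]|.

From HB Require Import structures.
From mathcomp Require Import all_boot all_order all_algebra.
From mathcomp Require Import reals.
From mathcomp Require Import ring lra.
Set Implicit Arguments. Unset Strict Implicit. Unset Printing Implicit Defensive.
Import Order.TTheory GRing.Theory Num.Theory.
Local Open Scope ring_scope.

(* If all signs but possibly iota_i equal t, then row i of A^*, multiplied by
   iota_i t, has positive off-diagonal entries, so a nonnegative kernel vector
   vanishes off i; any other row then reads A_ki x_i = 0 with A_ki <> 0.
   Sub-configurations inherit the hypothesis on the sign counts. *)

Lemma exists_neq (T : finType) (i : T) : (1 < #|T|)%N -> exists k, k != i.
Proof.
move=> T_gt1; have /card_gt0P[k] : (0 < #|[set~ i]|)%N.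
  by rewrite cardsC1 -ltnS prednK // ltnW.
by rewrite !inE; exists k.
Qed.

Lemma exists_exceptional (T : finType) (x0 : T) (P : pred T) :
  (#|[set j | ~~ P j]| <= 1)%N -> exists i, forall j, j != i -> P j.
Proof.
move=> /card_le1_eqP le1; case: (pickP (predC P)) => [i /= Pi | noP].
  exists i => j; apply: contraNT => Pj; apply/eqP/le1; by rewrite inE.
by exists x0 => j _; apply/negbFE/noP.
Qed.

Lemma card_preim_le (T T' : finType) (f : T' -> T) (P : pred T) :
  injective f -> (#|[set a | P (f a)]| <= #|[set j | P j]|)%N.
Proof.
move=> f_inj; rewrite -(card_imset _ f_inj); apply: subset_leq_card.
by apply/subsetP => _ /imsetP[a + ->]; rewrite !inE.
Qed.

Lemma nonneg_kernel_vanishes (R : numDomainType) (n : nat) (A : 'M[R]_n)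
    (x : 'cV[R]_n) (i j : 'I_n) :
  (forall k, 0 <= A i k) -> (forall k, 0 <= x k 0) -> (A *m x) i 0 = 0 ->
  0 < A i j -> x j 0 = 0.
Proof.
move=> A_ge0 x_ge0; rewrite mxE => /psumr_eq0P sum0 Aij_gt0.
have /eqP := sum0 (fun k _ => mulr_ge0 (A_ge0 k) (x_ge0 k)) j isT.
by rewrite mulf_eq0 gt_eqF //= => /eqP.
Qed.

Lemma supported_kernel_eq0 (R : idomainType) (n : nat) (A : 'M[R]_n)
    (x : 'cV[R]_n) (i k : 'I_n) :
  (forall j, j != i -> x j 0 = 0) -> A k i != 0 -> (A *m x) k 0 = 0 -> x = 0.
Proof.
move=> x_off Aki_neq0; rewrite mxE (bigD1 i) //= big1 ?addr0 => [|j ji]; last first.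
  by rewrite x_off ?mulr0.
move/eqP; rewrite mulf_eq0 (negbTE Aki_neq0) /= => /eqP xi0.
apply/matrixP => j l; rewrite ord1 mxE.
by case: (eqVneq j i) => [->|]; [exact: xi0 | exact: x_off].
Qed.

Lemma edist_gt0 (R : realType) (N : nat) (u v : 'rV[R]_N) :
  u != v -> 0 < edist u v.
Proof.
move=> neq_uv; rewrite sqrtr_gt0 lt_def sumr_ge0 ?andbT => [|k _]; last exact: sqr_ge0.
apply: contra neq_uv => /eqP/psumr_eq0P -/(_ (fun k _ => sqr_ge0 _)) sum0.
by apply/eqP/rowP => k; apply/eqP; rewrite -subr_eq0 -sqrf_eq0 sum0.
Qed.

Section Configuration.

Variables (R : realType) (N J : nat) (k0 kinf : R).
Variables (iota : 'I_J -> R) (z : 'I_J -> 'rV[R]_N).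
Hypotheses (k0_gt0 : 0 < k0) (kinf_gt0 : 0 < kinf).
Hypothesis iota_sign : forall i, iota i = 1 \/ iota i = -1.
Hypothesis z_inj : injective z.

Let A := Amat k0 kinf iota z.

Lemma Amat_diag i : A i i = 0.
Proof. by rewrite mxE eqxx. Qed.

Lemma Amat_signed_gt0 i j : i != j -> 0 < iota i * iota j * A i j.
Proof.
move=> ij; rewrite mxE ij.
have sqr_iota k : iota k ^+ 2 = 1 by case: (iota_sign k) => ->; rewrite ?sqrrN expr1n.
have -> : iota i * iota j * (k0 * kinf * iota i * iota j / edist (z i) (z j) ^+ (N - 2))
    = k0 * kinf * (iota i ^+ 2 * iota j ^+ 2) / edist (z i) (z j) ^+ (N - 2) by ring.
rewrite !sqr_iota mulr1 mulr1 divr_gt0 ?mulr_gt0 // exprn_gt0 // edist_gt0 //.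
by rewrite (inj_eq z_inj).
Qed.

Lemma nondegenerate_of_exceptional (i : 'I_J) (t : R) :
  (2 <= J)%N -> (forall j, j != i -> iota j = t) ->
  conf_nondegenerate k0 kinf iota z.
Proof.
move=> J_ge2 iota_t [x [x_neq0 x_ge0 Ax0]].
have [k ki] : exists k, k != i by apply: exists_neq; rewrite card_ord.
have signed_row j : j != i -> ((iota i * t) *: A) i j = iota i * iota j * A i j.
  by move=> ji; rewrite (iota_t j ji) mxE.
have x_off j : j != i -> x j 0 = 0.
  move=> ji; apply: (@nonneg_kernel_vanishes R J ((iota i * t) *: A) x i j) => //.
  - move=> l; case: (eqVneq l i) => [->|li]; first by rewrite mxE Amat_diag mulr0.
    by rewrite signed_row // ltW // Amat_signed_gt0 // eq_sym.
  - by rewrite -scalemxAl Ax0 scaler0 mxE.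
  - by rewrite signed_row // Amat_signed_gt0 // eq_sym.
apply/(negP x_neq0)/eqP/(@supported_kernel_eq0 R J A x i k x_off); last by rewrite Ax0 mxE.
by move: (Amat_signed_gt0 ki); apply: contraTneq => ->; rewrite mulr0 ltxx.
Qed.

Lemma exists_exceptional_sign :
  (0 < J)%N -> (npos iota <= 1)%N \/ (nneg iota <= 1)%N ->
  exists i t, forall j, j != i -> iota j = t.
Proof.
move=> J_gt0 few; have x0 : 'I_J := Ordinal J_gt0.
have [s s_few] : exists s, (#|[set j | iota j != s]| <= 1)%N.
  case: few => few; [exists (-1) | exists 1];
    apply: leq_trans (subset_leq_card _) few; apply/subsetP => j; rewrite !inE;
    by case: (iota_sign j) => ->; rewrite ?eqxx.
have [i off] := exists_exceptional x0 s_few.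
by exists i, s => j /off/eqP.
Qed.

Lemma nondegenerate_of_few_signs :
  (2 <= J)%N -> (npos iota <= 1)%N \/ (nneg iota <= 1)%N ->
  conf_nondegenerate k0 kinf iota z.
Proof.
move=> J_ge2 /(exists_exceptional_sign (ltnW J_ge2))[i [t iota_t]].
exact: nondegenerate_of_exceptional iota_t.
Qed.

End Configuration.

Lemma npos_add_nneg (R : realType) (J : nat) (iota : 'I_J -> R) :
  (npos iota + nneg iota <= J)%N.
Proof.
rewrite /npos /nneg -cardsUI.
have -> : [set i | iota i == 1] :&: [set i | iota i == -1] = set0.
  apply/setP => i; rewrite !inE; apply/negP => /andP[/eqP -> /eqP]; lra.
by rewrite cards0 addn0 (leq_trans (max_card _)) ?card_ord.
Qed.

Theorem lemma4p4 (R : realType) (N J : nat) (k0 kinf : R)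
    (iota : 'I_J -> R) (z : 'I_J -> 'rV[R]_N) :
  (7 <= N)%N -> 0 < k0 -> 0 < kinf -> (2 <= J)%N ->
  (forall i, iota i = 1 \/ iota i = -1) ->
  injective z ->
  ((npos iota <= 1)%N \/ (nneg iota <= 1)%N ->
     conf_totally_nondegenerate k0 kinf iota z)
  /\
  (~ conf_nondegenerate k0 kinf iota z ->
     [/\ (2 <= npos iota)%N,
         (2 <= nneg iota)%N & (4 <= J)%N]).
Proof.
move=> _ k0_gt0 kinf_gt0 J_ge2 iota_sign z_inj; split.
  move=> few I I_ge2; apply: nondegenerate_of_few_signs => //.
  - by move=> a; apply: iota_sign.
  - by move=> a b /z_inj/enum_val_inj.
  case: few => few; [left | right]; apply: leq_trans few;
    exact: (card_preim_le (fun j => iota j == _) (@enum_val_inj _ _)).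
move=> degenerate.
have few_signs_nondeg := nondegenerate_of_few_signs k0_gt0 kinf_gt0 iota_sign z_inj J_ge2.
have npos_ge2 : (2 <= npos iota)%N.
  by rewrite leqNgt; apply/negP => ?; apply/degenerate/few_signs_nondeg; left.
have nneg_ge2 : (2 <= nneg iota)%N.
  by rewrite leqNgt; apply/negP => ?; apply/degenerate/few_signs_nondeg; right.
split => //; apply: leq_trans (npos_add_nneg iota).
by rewrite -[4%N]/(2 + 2)%N leq_add.
Qed.
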